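(* Let $n\ge2$ and $\rho\in\mathbb{R}\setminus\{-1,0,1\}$. Then $K_n(\rho)=\left[\rho^{|j-k|}\right]_{j,k=1}^n$ has $n$ distinct real eigenvalues. *)

From HB Require Import structures.
From mathcomp Require Import all_boot all_order all_algebra.
From mathcomp Require Import reals.
Set Implicit Arguments. Unset Strict Implicit. Unset Printing Implicit Defensive.
Import Order.TTheory GRing.Theory Num.Theory.
Local Open Scope ring_scope.

(* Kac-Murdock-Szego matrix K_n(rho) = [rho^{|j-k|}]_{j,k}, indices 0..n-1
   (shift of the paper's 1..n, which does not change |j-k|). *)
Definition KMS (R : realType) (n : nat) (rho : R) : 'M[R]_n :=
  \matrix_(j < n, k < n) rho ^+ `|(j : nat) - (k : nat)|%N.

(* T := (1 - rho^2) K_n(rho)^-1 is the symmetric tridiagonal matrix with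
   off-diagonal entries -rho, so every eigenvalue mu of T gives the eigenvalue
   (1 - rho^2) / mu of K_n(rho).  The characteristic polynomials p_k of the
   leading blocks of T obey p_(k+1) = (X - d_k) p_k - rho^2 p_(k-1), and for a
   root mu of p_n the row (p_k(mu) (-rho)^-k)_k is an eigenvector of T.
   Because rho^2 > 0 the classical Sturm argument applies: if the roots of
   p_(k-1) interlace the k roots of p_k, then at these roots
   p_(k+1) = -rho^2 p_(k-1) alternates in sign, and at the extreme ones its
   sign is opposite to its sign at -oo, resp. +oo; by the intermediate value
   theorem p_(k+1) has k + 1 roots, interlaced by those of p_k. *)

From HB Require Import structures.
From mathcomp Require Import all_boot all_order all_algebra.
From mathcomp Require Import reals.
From mathcomp Require Import zify ring.
From mathcomp Require Import polyrcf.
Set Implicit Arguments. Unset Strict Implicit.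
Import Order.TTheory GRing.Theory Num.Theory.
Local Open Scope ring_scope.

Section IncreasingNatSeq.
Variables (disp : Order.disp_t) (T : porderType disp) (x : nat -> T) (k : nat).

Lemma lt_nat_chain : (forall i, (i.+1 < k)%N -> (x i < x i.+1)%O) ->
  forall i j, (i < j < k)%N -> (x i < x j)%O.
Proof.
move=> step i j /andP[ij jk].
apply: (@Order.NatMonotonyTheory.homo_ltn_lt_in _ _ (gtn k)) => //;
  rewrite ?unfold_in /=.
- by move=> a b _; rewrite unfold_in /= => bk c /andP[_ cb]; rewrite unfold_in /=; lia.
- by move=> a _; rewrite unfold_in; apply: step.
- lia.
Qed.

Lemma le_nat_chain : (forall i j, (i < j < k)%N -> (x i < x j)%O) ->
  forall i j, (i <= j < k)%N -> (x i <= x j)%O.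
Proof.
move=> incr i j /andP[]; rewrite leq_eqVlt => /orP[/eqP-> // | ij jk].
by apply/ltW/incr; rewrite ij.
Qed.

Lemma uniq_mkseq_incr :
  (forall i j, (i < j < k)%N -> (x i < x j)%O) -> uniq (mkseq x k).
Proof.
move=> incr; rewrite /mkseq map_inj_in_uniq ?iota_uniq // => i j.
rewrite !mem_iota !add0n /= => ik jk xij.
by case: (ltngtP i j) => // [ij | ji]; [have := incr i j | have := incr j i];
  rewrite ?ij ?ji ?ik ?jk xij ltxx => /(_ isT).
Qed.

End IncreasingNatSeq.

Section PolyRoots.
Variable R : rcfType.
Implicit Types (p : {poly R}) (u : R).

Lemma poly_root_gt p u :
  0 < lead_coef p -> p.[u] < 0 -> exists2 y, u < y & root p y.
Proof.
move=> lc_gt0 pu_lt0; have [N pN] := poly_pinfty_gt_lc lc_gt0.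
have uv : u <= Num.max N u by rewrite le_max lexx orbT.
have pv_gt0 : 0 < p.[Num.max N u].
  by rewrite (lt_le_trans lc_gt0) // pN // le_max lexx.
have [y] : {y | y \in `]u, Num.max N u[ & root p y}.
  by apply: poly_ivtoo uv _; rewrite pmulr_llt0.
by rewrite in_itv /= => /andP[uy _] py; exists y.
Qed.

Lemma poly_root_lt p u :
  0 < lead_coef p -> 0 < (-1) ^+ size p * p.[u] -> exists2 y, y < u & root p y.
Proof.
move=> lc_gt0 pu_sgn; set d := (size p).-1.
have size_p : size p = d.+1.
  by rewrite prednK // lt0n size_poly_eq0 -lead_coef_eq0 gt_eqF.
pose q := (-1) ^+ d *: (p \Po - 'X).
have hornerq v : q.[v] = (-1) ^+ d * p.[- v].
  by rewrite hornerZ horner_comp hornerN hornerX.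
have lc_q : lead_coef q = lead_coef p.
  rewrite lead_coefZ lead_coef_comp ?size_polyN ?size_polyX // lead_coefN lead_coefX.
  by rewrite -/d [lead_coef p * _]mulrC signrMK.
have [y uy qy] : exists2 y, - u < y & root q y.
  apply: poly_root_gt; first by rewrite lc_q.
  by move: pu_sgn; rewrite hornerq opprK size_p exprS mulN1r mulNr oppr_gt0.
exists (- y); first by rewrite ltrNl.
by move: qy; rewrite /root hornerq mulf_eq0 signr_eq0.
Qed.

End PolyRoots.

Lemma prod_sub_sign (R : realDomainType) (x : nat -> R) y j k : (j <= k)%N ->
  (forall i, (i < j)%N -> x i < y) -> (forall i, (j <= i < k)%N -> y < x i) ->
  0 < (-1) ^+ (k - j) * \prod_(0 <= i < k) (y - x i).
Proof.
move=> jk below above; rewrite (big_cat_nat (leq0n j) jk) /=.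
have -> : \prod_(j <= i < k) (y - x i) =
           (-1) ^+ (k - j) * \prod_(j <= i < k) (x i - y).
  rewrite -prodr_const_nat -big_split.
  by apply: eq_bigr => i _; rewrite /= mulN1r opprB.
rewrite /= mulrCA signrMK; apply: mulr_gt0; rewrite big_seq; apply: prodr_gt0 => i;
  rewrite mem_index_iota subr_gt0 => ?; [apply: below | apply: above]; lia.
Qed.

Lemma mul_lt0_sign (R : numDomainType) (m : nat) (u v : R) :
  0 < (-1) ^+ m.+1 * u -> 0 < (-1) ^+ m * v -> u * v < 0.
Proof.
move=> su sv; have := mulr_gt0 su sv.
by rewrite exprS mulN1r !mulNr mulrACA -expr2 sqrr_sign mul1r oppr_gt0.
Qed.

Lemma sum_delta (R : pzSemiRingType) (m : nat) (F : nat -> R) i :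
  \sum_(l < m) (l == i :> nat)%:R * F l = (i < m)%:R * F i.
Proof.
under eq_bigr => l _ do rewrite mulr_natl mulrb.
by rewrite -big_mkcond big_ord1_eq mulr_natl mulrb.
Qed.

Lemma eigenvalue_scaled_inverse (F : fieldType) m (A B : 'M[F]_m) (c mu : F) :
  c != 0 -> A *m B = c%:M -> eigenvalue A mu -> eigenvalue B (c / mu).
Proof.
move=> c_neq0 AB /eigenvalueP[v vA v_neq0]; apply/eigenvalueP; exists v => //.
have vB : mu *: (v *m B) = c *: v by rewrite scalemxAl -vA -mulmxA AB mul_mx_scalar.
have mu_neq0 : mu != 0.
  apply/eqP => mu0; move: vB; rewrite mu0 scale0r => /esym/eqP.
  by rewrite scaler_eq0 (negPf c_neq0) (negPf v_neq0).
by rewrite mulrC -scalerA -vB scalerA mulVf // scale1r.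
Qed.

Section ThreeTermRecurrence.
Variables (R : rcfType) (a : nat -> R) (c : R).

Fixpoint rec_polys k : {poly R} * {poly R} :=
  if k is k'.+1 then
    let: (p_pred, p) := rec_polys k' in (p, ('X - (a k')%:P) * p - c%:P * p_pred)
  else (0, 1).

Definition rec_poly k := (rec_polys k).2.
Definition rec_poly_pred k := (rec_polys k).1.

Lemma rec_poly0 : rec_poly 0 = 1. Proof. by []. Qed.
Lemma rec_poly_pred0 : rec_poly_pred 0 = 0. Proof. by []. Qed.
Lemma rec_poly_predS k : rec_poly_pred k.+1 = rec_poly k.
Proof. by rewrite /rec_poly_pred /rec_poly /=; case: rec_polys. Qed.
Lemma rec_polyS k :
  rec_poly k.+1 = ('X - (a k)%:P) * rec_poly k - c%:P * rec_poly_pred k.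
Proof. by rewrite /rec_poly_pred /rec_poly /=; case: rec_polys. Qed.

Lemma horner_rec_polyS k y :
  (rec_poly k.+1).[y] = (y - a k) * (rec_poly k).[y] - c * (rec_poly_pred k).[y].
Proof. by rewrite rec_polyS hornerD hornerN !hornerM hornerC hornerXsubC. Qed.

Lemma rec_poly_monic_size k : rec_poly k \is monic /\ size (rec_poly k) = k.+1.
Proof.
suff [] : [/\ rec_poly k \is monic, size (rec_poly k) = k.+1
             & (size (rec_poly_pred k) <= k)%N] by [].
elim: k => [|k [mon sz sz_pred]].
  by rewrite rec_poly0 rec_poly_pred0 monic1 size_poly1 size_poly0.
have mon_lead : ('X - (a k)%:P) * rec_poly k \is monic by rewrite monicMl ?monicXsubC.
have sz_lead : size (('X - (a k)%:P) * rec_poly k) = k.+2.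
  by rewrite size_monicM ?monicXsubC ?monic_neq0 // size_XsubC sz.
have sz_tail : (size (- (c%:P * rec_poly_pred k)) < k.+2)%N.
  rewrite size_polyN mul_polyC (leq_ltn_trans (size_scale_leq _ _)) //.
  exact: leq_ltn_trans sz_pred _.
rewrite rec_polyS rec_poly_predS sz; split => //.
  by rewrite monicE lead_coefDl ?sz_lead.
by rewrite size_polyDl sz_lead.
Qed.

(* Interlacing is recorded through the signs of [rec_poly_pred k] at the
   increasing roots [x i] of [rec_poly k]. *)
Definition interlacing_roots k (x : nat -> R) :=
  [/\ forall i j, (i < j < k)%N -> x i < x j,
      forall i, (i < k)%N -> root (rec_poly k) (x i) &
      forall i, (i < k)%N -> 0 < (-1) ^+ (k.-1 - i) * (rec_poly_pred k).[x i]].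

Lemma horner_rec_poly_prod k x : interlacing_roots k x ->
  forall y, (rec_poly k).[y] = \prod_(0 <= i < k) (y - x i).
Proof.
case=> incr roots _ y; have [mon sz] := rec_poly_monic_size k.
rewrite (@all_roots_prod_XsubC _ (rec_poly k) (mkseq x k)) ?size_mkseq ?uniq_rootsE.
- rewrite (monicP mon) scale1r horner_prod big_map.
  by rewrite /index_iota subn0; apply: eq_bigr => i _; rewrite hornerXsubC.
- exact: sz.
- by apply/allP => z /mapP[i]; rewrite mem_iota => /andP[_ ik] ->; apply: roots.
- exact: uniq_mkseq_incr.
Qed.

Hypothesis c_gt0 : 0 < c.

Lemma rec_polyS_sign k x i : interlacing_roots k x -> (i < k)%N ->
  0 < (-1) ^+ (k - i) * (rec_poly k.+1).[x i].
Proof.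
case=> _ roots sgn ik; rewrite horner_rec_polyS (rootP (roots i ik)) mulr0 sub0r.
have -> : (k - i = (k.-1 - i).+1)%N by lia.
by rewrite exprS mulN1r mulNr mulrN opprK mulrCA pmulr_rgt0 // sgn.
Qed.

Lemma rec_polyS_root_between k x j : (0 < k)%N -> interlacing_roots k x ->
  (j <= k)%N -> exists y,
  [/\ (0 < j)%N -> x j.-1 < y, (j < k)%N -> y < x j & root (rec_poly k.+1) y].
Proof.
move=> k_gt0 hx jk; have [incr _ _] := hx.
have [mon sz] := rec_poly_monic_size k.+1.
have lc_gt0 : 0 < lead_coef (rec_poly k.+1) by rewrite (monicP mon) ltr01.
have [j0 | j_gt0] := posnP j.
  have [|y y_lt root_y] := @poly_root_lt _ _ (x 0%N) lc_gt0.
    by rewrite sz !exprS !mulN1r opprK; have := rec_polyS_sign hx k_gt0; rewrite subn0.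
  by exists y; rewrite j0.
have [jk' | jk'] := ltnP j k.
  have le_x : x j.-1 <= x j by apply/ltW/incr; lia.
  have sign_change : (rec_poly k.+1).[x j.-1] * (rec_poly k.+1).[x j] < 0.
    apply: (@mul_lt0_sign _ (k - j)); last exact: rec_polyS_sign hx jk'.
    have -> : (k - j).+1 = (k - j.-1)%N by lia.
    by apply: rec_polyS_sign hx _; lia.
  have [y] := poly_ivtoo le_x sign_change.
  by rewrite in_itv /= => /andP[lt_y y_lt] root_y; exists y.
have [|y y_gt root_y] := @poly_root_gt _ _ (x k.-1) lc_gt0.
  have last_lt : (k.-1 < k)%N by rewrite ltn_predL.
  have := rec_polyS_sign hx last_lt.
  by rewrite -[X in (X - k.-1)%N](prednK k_gt0) subSnn expr1 mulN1r oppr_gt0.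
have j_eq : j = k by lia.
by exists y; rewrite j_eq; split.
Qed.

Lemma interlacing_rootsS k x : (0 < k)%N -> interlacing_roots k x ->
  exists y, interlacing_roots k.+1 y.
Proof.
move=> k_gt0 hx; have [incr _ _] := hx.
have gap j : exists y, (j <= k)%N ==> [&& (0 < j)%N ==> (x j.-1 < y),
    (j < k)%N ==> (y < x j) & root (rec_poly k.+1) y].
  have [jk | kj] := leqP j k; last by exists 0.
  have [y [lt_y y_lt root_y]] := rec_polyS_root_between k_gt0 hx jk.
  by exists y; apply/and3P; split => //; apply/implyP.
pose y j := xchoose (gap j).
have y_spec j : (j <= k)%N ->
    [/\ (0 < j)%N -> x j.-1 < y j, (j < k)%N -> y j < x j
       & root (rec_poly k.+1) (y j)].
  move=> jk; have /implyP/(_ jk)/and3P[lt_y y_lt root_y] := xchooseP (gap j).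
  by split => //; apply/implyP.
exists y; split.
- apply: lt_nat_chain => i ik.
  have [_ y_lt _] := y_spec i (ltnW ik); have [lt_y _ _] := y_spec i.+1 ik.
  exact: lt_trans (y_lt ik) (lt_y isT).
- by move=> i ik; have [_ _] := y_spec i ik.
move=> i ik; rewrite rec_poly_predS (horner_rec_poly_prod hx) /=.
have [lt_y y_lt _] := y_spec i ik.
apply: prod_sub_sign => // [l li | l /andP[il lk]].
  by apply: le_lt_trans (lt_y _); [apply: (le_nat_chain incr)|]; lia.
by apply: lt_le_trans (y_lt _) _; [|apply: (le_nat_chain incr)]; lia.
Qed.

Lemma interlacing_roots_exist k : exists x, interlacing_roots k x.
Proof.
elim: k => [|k [x hx]].
  by exists (fun=> 0); split=> [i j|i|i]; rewrite ?ltn0 ?andbF.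
have [k0 | k_gt0] := posnP k; last exact: interlacing_rootsS k_gt0 hx.
exists (fun=> a 0); rewrite k0.
split=> [i [|j] | i _ | i _]; rewrite ?ltn0 ?ltnS ?leqn0 ?andbF //.
  by rewrite /root (horner_rec_polyS 0) rec_poly0 rec_poly_pred0 !hornerE subrr subr0.
by rewrite (rec_poly_predS 0) rec_poly0 hornerC mulr1 ltr01.
Qed.

Theorem rec_poly_uniq_roots k :
  exists s : seq R, [/\ size s = k, uniq s & all (root (rec_poly k)) s].
Proof.
have [x [incr roots _]] := interlacing_roots_exist k.
exists (mkseq x k); split; first exact: size_mkseq.
  exact: uniq_mkseq_incr.
by apply/allP => z /mapP[i]; rewrite mem_iota => /andP[_ ik] ->; apply: roots.
Qed.

End ThreeTermRecurrence.

Section KMSInverse.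
Variables (R : realType) (n : nat) (rho : R).

(* [kms_tridiag] is (1 - rho^2) (KMS n rho)^-1; for n >= 2 its diagonal
   [kms_diag] is 1 at both ends and 1 + rho^2 inside. *)
Definition kms_diag (j : nat) : R :=
  1 - rho ^+ 2 + ((0 < j)%N + (j.+1 < n)%N)%:R * rho ^+ 2.

Definition kms_tridiag : 'M[R]_n :=
  \matrix_(j, l)
    ((j == l)%:R * kms_diag j - (`|(j : nat) - (l : nat)|%N == 1)%:R * rho).

Lemma kms_tridiagC j l : kms_tridiag j l = kms_tridiag l j.
Proof. by rewrite !mxE eq_sym distnC; case: eqP => [->|]; rewrite ?mul0r. Qed.

Lemma kms_tridiag_row (G : nat -> R) (j : 'I_n) :
  \sum_(l < n) kms_tridiag j l * G l =
  kms_diag j * G j - rho * ((0 < j)%N%:R * G j.-1 + (j.+1 < n)%N%:R * G j.+1).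
Proof.
have dist1 (l : 'I_n) : (`|(j : nat) - (l : nat)|%N == 1)%:R =
    (0 < j)%N%:R * (l == j.-1 :> nat)%:R + (l == j.+1 :> nat)%:R :> R.
  by rewrite -natrM -natrD; congr _%:R; case: (ltngtP l j); lia.
have term (l : 'I_n) : kms_tridiag j l * G l =
    kms_diag j * ((l == j :> nat)%:R * G l) - rho * ((0 < j)%N%:R
      * ((l == j.-1 :> nat)%:R * G l) + (l == j.+1 :> nat)%:R * G l).
  by rewrite mxE dist1 eq_sym; ring.
rewrite (eq_bigr _ (fun l _ => term l)) sumrB -!mulr_sumr big_split -mulr_sumr /=.
by rewrite !sum_delta ltn_ord (leq_ltn_trans (leq_pred j) (ltn_ord j)) !mul1r.
Qed.

Lemma kms_tridiag_mulmx : kms_tridiag *m KMS n rho = (1 - rho ^+ 2)%:M.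
Proof.
apply/matrixP => j k; rewrite !mxE.
under eq_bigr => l _ do rewrite [KMS _ _ l k]mxE.
rewrite (kms_tridiag_row (fun l => rho ^+ `|l - k|%N)) /kms_diag -val_eqE /=.
case: (ltngtP j k) => [jk | kj | /val_inj ->]; rewrite ?mulr0n ?mulr1n ?natrD.
- have -> : (j.+1 < n)%N by rewrite (leq_ltn_trans jk).
  have -> : `|(j : nat) - k|%N = (k - j.+1).+1 by lia.
  have -> : `|j.+1 - k|%N = (k - j.+1)%N by lia.
  have -> : (0 < j)%N%:R * rho ^+ `|j.-1 - k|%N =
            (0 < j)%N%:R * rho ^+ (k - j.+1).+2.
    case: (posnP j) => [-> | j_gt0]; first by rewrite !mul0r.
    by rewrite (_ : `|j.-1 - k|%N = (k - j.+1).+2) //; lia.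
  by rewrite /= !exprS; ring.
- have -> : (0 < j)%N by rewrite (leq_ltn_trans _ kj).
  have -> : `|(j : nat) - k|%N = (j - k.+1).+1 by lia.
  have -> : `|j.-1 - k|%N = (j - k.+1)%N by lia.
  have -> : `|j.+1 - k|%N = (j - k.+1).+2 by lia.
  by rewrite /= !exprS; ring.
- have -> : (0 < k)%N%:R * rho ^+ `|k.-1 - k|%N = (0 < k)%N%:R * rho.
    case: (posnP k) => [-> | k_gt0]; first by rewrite !mul0r.
    by rewrite (_ : `|k.-1 - k|%N = 1) //; lia.
  have -> : `|(k : nat) - k|%N = 0%N by lia.
  have -> : `|k.+1 - k|%N = 1%N by lia.
  by rewrite /= expr0 expr1; ring.
Qed.

Local Notation char_tridiag := (rec_poly kms_diag (rho ^+ 2)).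

Lemma kms_tridiag_eigenvalue mu : rho != 0 -> (0 < n)%N ->
  root (char_tridiag n) mu -> eigenvalue kms_tridiag mu.
Proof.
move=> rho_neq0 n_gt0 root_mu.
pose G k := (char_tridiag k).[mu] * (- rho) ^- k.
have nonzero_denoms k : ((- rho) ^+ k != 0) && (rho != 0).
  by rewrite expf_neq0 ?oppr_eq0 rho_neq0.
have G_next k : (k < n)%N -> (k.+1 < n)%N%:R * G k.+1 = G k.+1.
  move=> kn; case: ltnP => [_ | nk]; first by rewrite mul1r.
  by rewrite (_ : k.+1 = n) ?mul0r /G ?(rootP root_mu) ?mul0r //; lia.
have G_prev k : (0 < k)%N%:R * G k.-1 =
    (rec_poly_pred kms_diag (rho ^+ 2) k).[mu] * (- rho) ^- k * - rho.
  case: k => [|k]; first by rewrite rec_poly_pred0 horner0 !mul0r.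
  rewrite rec_poly_predS mul1r /G /= [(- rho) ^+ k.+1]exprS.
  by field; apply: nonzero_denoms.
apply/eigenvalueP; exists (\row_(k < n) G k).
  apply/rowP => k; rewrite !mxE.
  under eq_bigr => l _ do rewrite mxE kms_tridiagC mulrC.
  rewrite kms_tridiag_row G_next // G_prev /G horner_rec_polyS.
  by rewrite [(- rho) ^+ k.+1]exprS; field; apply: nonzero_denoms.
apply/eqP => /rowP /(_ (Ordinal n_gt0)) /eqP.
by rewrite !mxE /G rec_poly0 hornerC expr0 invr1 mulr1 oner_eq0.
Qed.

End KMSInverse.

Theorem proposition6p1 (R : realType) (n : nat) (rho : R) :
  (2 <= n)%N -> rho != -1 -> rho != 0 -> rho != 1 ->
  exists s : seq R,
    [/\ size s = n, uniq s & forall x, x \in s -> eigenvalue (KMS n rho) x].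
Proof.
move=> n_ge2 rho_neqN1 rho_neq0 rho_neq1.
have rho2_gt0 : 0 < rho ^+ 2 by rewrite exprn_even_gt0.
have one_sub_rho2_neq0 : 1 - rho ^+ 2 != 0.
  by rewrite subr_eq0 eq_sym sqrf_eq1 negb_or rho_neq1 rho_neqN1.
have [s [size_s uniq_s roots_s]] := rec_poly_uniq_roots (kms_diag n rho) rho2_gt0 n.
exists [seq (1 - rho ^+ 2) / mu | mu <- s]; split.
- by rewrite size_map.
- by rewrite map_inj_uniq // => mu nu /(mulfI one_sub_rho2_neq0)/invr_inj.
move=> _ /mapP[mu mu_s ->].
apply: eigenvalue_scaled_inverse one_sub_rho2_neq0 (kms_tridiag_mulmx n rho) _.
by apply: kms_tridiag_eigenvalue => //; [lia | exact: (allP roots_s)].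
Qed.
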